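(* Let $\Sigma$ be a ranked signature containing a constant, let $k$ be the maximal arity of a letter of $\Sigma$, and let $u=v$ be a context equation over $\Sigma$. Suppose $u = v$ has a solution $\sigma'$ over a signature $\Sigma'\supseteq\Sigma$ such that every letter of $\Sigma'\setminus\Sigma$ does not occur in $u=v$ and has arity at most $k$. Then $u = v$ also has a solution over $\Sigma$, which is at most $k$ times larger.
   Context: A ranked signature assigns an arity $\mathrm{ar}(f)\in\mathbb N$ to each letter. $\Omega$ is a special constant not in any signature. Context variables have arity $1$ and variables arity $0$. Over a signature $\Delta$: a ground term is a finite ordered tree labelled by $\Delta$ with each node labelled $f$ having $\mathrm{ar}(f)$ children; a ground context is a ground term over $\Delta\cup\{\Omega\}$ with exactly one $\Omega$; for a ground context $s$ and ground term/context $t$, $st$ replaces $\Omega$ in $s$ by $t$. Terms are well-formed trees over $\Sigma$, variables and context variables; a context equation is $u=v$ with $u,v$ terms. A substitution over $\Delta$ assigns a ground context over $\Delta$ to each context variable and a ground term over $\Delta$ to each variable, extended by $\sigma(a)=a$, $\sigma(f(t_1,\dots,t_m))=f(\sigma(t_1),\dots,\sigma(t_m))$, $\sigma(Xt)=\sigma(X)\sigma(t)$; it is a solution if $\sigma(u)=\sigma(v)$. The size of a solution is the number of nodes of $\sigma(u)$. *)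

From mathcomp Require Import all_boot.
Set Implicit Arguments. Unset Strict Implicit. Unset Printing Implicit Defensive.

(* Letters live in a universe type [A] (an eqType) equipped with an arity
   function [ar]; a (ranked) signature is a finite list of letters. *)

Section Defs.
Variable A : eqType.
Variable ar : A -> nat.

(* Trees labelled by letters or by the special constant Omega (= None). *)
Inductive tree : Type := Node : option A -> seq tree -> tree.

Fixpoint nnodes (t : tree) : nat :=
  let: Node _ ts := t in (sumn (map nnodes ts)).+1.

Fixpoint omegas (t : tree) : nat :=
  let: Node o ts := t in (if o is None then 1 else 0) + sumn (map omegas ts).

Fixpoint wf_tree (D : seq A) (t : tree) : bool :=
  let: Node o ts := t in
  match o with
  | Some f => [&& f \in D, size ts == ar f & all (wf_tree D) ts]
  | None => size ts == 0
  end.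

Definition ground_term (D : seq A) (t : tree) : bool :=
  wf_tree D t && (omegas t == 0).

Definition ground_context (D : seq A) (t : tree) : bool :=
  wf_tree D t && (omegas t == 1).

Fixpoint fill (s t : tree) : tree :=
  let: Node o ss := s in
  match o with
  | None => t
  | Some f => Node (Some f) (map (fun s' => fill s' t) ss)
  end.

Variables V C : Type.
Inductive term : Type :=
  | TApp : A -> seq term -> term
  | TVar : V -> term
  | TCVar : C -> term -> term.

Fixpoint wf_term (D : seq A) (t : term) : bool :=
  match t with
  | TApp f ts => [&& f \in D, size ts == ar f & all (wf_term D) ts]
  | TVar _ => true
  | TCVar _ t' => wf_term D t'
  end.

Fixpoint subst (sv : V -> tree) (sc : C -> tree) (t : term) : tree :=
  match t with
  | TApp f ts => Node (Some f) (map (subst sv sc) ts)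
  | TVar x => sv x
  | TCVar X t' => fill (sc X) (subst sv sc t')
  end.

Definition substitution_over (D : seq A) (sv : V -> tree) (sc : C -> tree) : Prop :=
  (forall x, ground_term D (sv x)) /\ (forall X, ground_context D (sc X)).

Definition solution_over (D : seq A) (sv : V -> tree) (sc : C -> tree)
  (u v : term) : Prop :=
  substitution_over D sv sc /\ subst sv sc u = subst sv sc v.

Fixpoint occurs (f : A) (t : term) : bool :=
  match t with
  | TApp g ts => (g == f) || has (occurs f) ts
  | TVar _ => false
  | TCVar _ t' => occurs f t'
  end.

End Defs.

(** The retraction erases the letters of [Sigma' \ Sigma] from a tree: a new
    letter of arity 0 becomes the constant [c], and a new letter of positive
    arity becomes a letter [g] of [Sigma] of maximal arity [k], its missing
    children filled in with copies of [c]. It commutes with filling a context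
    and fixes the letters of [Sigma], hence commutes with substitution into
    terms over [Sigma] and maps a solution over [Sigma'] to one over [Sigma];
    each node is replaced by at most [max k 1] nodes. *)

From mathcomp Require Import all_boot zify.
From Stdlib Require List.

Set Implicit Arguments. Unset Strict Implicit. Unset Printing Implicit Defensive.

Section Induction.
Variables (A : eqType) (V C : Type).

Definition tree_ind_forall (P : tree A -> Prop)
    (IH : forall o ts, List.Forall P ts -> P (Node o ts)) : forall t, P t :=
  fix F t := let: Node o ts := t in IH o ts
    ((fix G ts := match ts return List.Forall P ts with
       | [::] => List.Forall_nil _
       | t :: ts' => List.Forall_cons _ (F t) (G ts') end) ts).

Definition term_ind_forall (P : term A V C -> Prop)
    (IHapp : forall f ts, List.Forall P ts -> P (TApp f ts))
    (IHvar : forall x, P (TVar _ _ x))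
    (IHcvar : forall X t, P t -> P (TCVar X t)) : forall t, P t :=
  fix F t := match t with
  | TApp f ts => IHapp f ts
    ((fix G ts := match ts return List.Forall P ts with
       | [::] => List.Forall_nil _
       | t :: ts' => List.Forall_cons _ (F t) (G ts') end) ts)
  | TVar x => IHvar x
  | TCVar X t => IHcvar X t (F t) end.

End Induction.

Section Retraction.
Variables (A : eqType) (ar : A -> nat) (Sigma : seq A) (k : nat) (g c : A).

Definition leaf (a : A) : tree A := Node (Some a) [::].

Fixpoint retract (t : tree A) : tree A :=
  let: Node o ts := t in
  match o with
  | None => Node None (map retract ts)
  | Some f => if f \in Sigma then Node (Some f) (map retract ts)
              else if ts is [::] then leaf c
              else Node (Some g) (map retract ts ++ nseq (k - size ts) (leaf c))
  end.

Lemma retract_fill s t : retract (fill s t) = fill (retract s) (retract t).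
Proof.
elim/tree_ind_forall: s => [[f|] ss IH] //=.
have map_fill : map retract (map (fun s => fill s t) ss) = map (fun s => fill s (retract t)) (map retract ss).
  by rewrite -!map_comp; apply: List.map_ext_Forall.
case: (f \in Sigma); first by rewrite map_fill.
case: ss IH map_fill => // s ss _ map_fill.
rewrite /= size_map map_cat map_nseq.
by case: map_fill => -> ->.
Qed.

Lemma omegas_retract t : omegas (retract t) = omegas t.
Proof.
elim/tree_ind_forall: t => o ts IH.
have sum_ts : sumn (map (@omegas A) (map retract ts)) = sumn (map (@omegas A) ts).
  by rewrite -map_comp; congr sumn; apply: List.map_ext_Forall.
case: o => [f|] /=; last by rewrite sum_ts.
case: (f \in Sigma); first by rewrite /= sum_ts.
case: ts IH sum_ts => //= s ss _ sum_ts.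
by rewrite map_cat sumn_cat map_nseq sumn_nseq mul0n addn0 addnA sum_ts.
Qed.

Lemma nnodes_retract t : nnodes (retract t) <= maxn k 1 * nnodes t.
Proof.
elim/tree_ind_forall: t => o ts IH.
have sum_ts : sumn (map (@nnodes A) (map retract ts))
              <= maxn k 1 * sumn (map (@nnodes A) ts).
  by elim: IH => //= t ts' IHt _ IHts; rewrite mulnDr leq_add.
have k1_pos : 0 < maxn k 1 by rewrite leq_max orbT.
case: o => [f|] /=; last by rewrite mulnS; lia.
case: (f \in Sigma); first by rewrite /= mulnS; lia.
case: ts IH sum_ts => [|s ss] _ sum_ts /=; first by rewrite muln1.
rewrite map_cat sumn_cat map_nseq sumn_nseq mul1n mulnS.
have := leq_maxl k 1; move: sum_ts => /=; lia.
Qed.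

Lemma retract_subst (V C : Type) (sv : V -> tree A) (sc : C -> tree A) u :
  wf_term ar Sigma u ->
  retract (subst sv sc u) = subst (retract \o sv) (retract \o sc) u.
Proof.
elim/term_ind_forall: u => [f ts IH|x|X t IH] //=.
- case/and3P=> -> _ wf_ts; congr Node; rewrite -map_comp.
  by elim: IH wf_ts => //= t ts' IHt _ IHts /andP[/IHt -> /IHts ->].
- by move/IH <-; rewrite retract_fill.
Qed.

Section WellFormed.
Variable Sigma' : seq A.
Hypotheses (c_in : c \in Sigma) (ar_c : ar c = 0) (g_in : g \in Sigma) (ar_g : ar g = k).
Hypothesis ar_new : forall f, f \in Sigma' -> f \notin Sigma -> ar f <= k.

Lemma wf_retract t : wf_tree ar Sigma' t -> wf_tree ar Sigma (retract t).
Proof.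
elim/tree_ind_forall: t => o ts IH.
have wf_ts : all (wf_tree ar Sigma') ts -> all (wf_tree ar Sigma) (map retract ts).
  by elim: IH => //= t ts' IHt _ IHts /andP[/IHt -> /IHts].
have wf_leaf : wf_tree ar Sigma (leaf c) by rewrite /= c_in ar_c.
case: o => [f|] /=; last by rewrite size_map.
case/and3P=> f_in' /eqP size_ts /wf_ts {}wf_ts.
case: ifP => f_in; first by rewrite /= f_in size_map size_ts eqxx wf_ts.
case: ts IH size_ts wf_ts => [|s ss] _ size_ts wf_ts //=.
have := ar_new f_in' (negbT f_in); rewrite -size_ts /= => ar_f.
rewrite g_in size_cat size_map size_nseq ar_g all_cat all_nseq wf_leaf orbT andbT.
by move: wf_ts => /= /andP[-> ->]; apply/eqP; lia.
Qed.

Lemma retract_substitution_over (V C : Type) (sv : V -> tree A) (sc : C -> tree A) :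
  substitution_over ar Sigma' sv sc ->
  substitution_over ar Sigma (retract \o sv) (retract \o sc).
Proof.
case=> ground_sv ground_sc; split=> [x|X].
- by case/andP: (ground_sv x) => /wf_retract wf_x; rewrite /ground_term /= wf_x omegas_retract.
- by case/andP: (ground_sc X) => /wf_retract wf_X; rewrite /ground_context /= wf_X omegas_retract.
Qed.

End WellFormed.
End Retraction.

Theorem lemma3p4 (A : eqType) (ar : A -> nat) (V C : Type)
    (Sigma Sigma' : seq A) (k : nat) (u v : term A V C)
    (sv' : V -> tree A) (sc' : C -> tree A) :
  (exists2 c, c \in Sigma & ar c = 0) ->
  (forall f, f \in Sigma -> ar f <= k) ->
  (exists2 f, f \in Sigma & ar f = k) ->
  wf_term ar Sigma u -> wf_term ar Sigma v ->
  {subset Sigma <= Sigma'} ->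
  (forall f, f \in Sigma' -> f \notin Sigma ->
     [/\ ~~ occurs f u, ~~ occurs f v & ar f <= k]) ->
  solution_over ar Sigma' sv' sc' u v ->
  exists sv sc, solution_over ar Sigma sv sc u v /\
    nnodes (subst sv sc u) <= maxn k 1 * nnodes (subst sv' sc' u).
Proof.
move=> [c c_in ar_c] _ [g g_in ar_g] wf_u wf_v _ new [over' solves'].
have ar_new f : f \in Sigma' -> f \notin Sigma -> ar f <= k.
  by move=> f_in' f_out; case: (new f f_in' f_out).
have r_u := retract_subst k g c sv' sc' wf_u.
have r_v := retract_subst k g c sv' sc' wf_v.
exists (retract Sigma k g c \o sv'), (retract Sigma k g c \o sc').
split; last by rewrite -r_u nnodes_retract.
split; first exact: retract_substitution_over over'.
by rewrite -r_u -r_v solves'.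
Qed.
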